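(* Let $\Bbbk$ be an algebraically closed field of characteristic zero, $G$ a finite group, $\chi:G\to\Bbbk^\times$ a linear character, $g\in Z(G)$, $n\geq 2$ the multiplicative order of $\chi(g)$, and $H$ the $\Bbbk$-algebra generated by $\Bbbk G$ and $z$ with relations $z^n=0$, $zs=\chi(s)sz$ ($s\in G$). Suppose $$(z^{l_1}h_1+\cdots+z^{l_t}h_t)=(z^{m_1}a_1+\cdots+z^{m_r}a_r),$$ where $n-1\geq l_1>\cdots>l_t\geq0$, $n-1\geq m_1>\cdots>m_r\geq0$, $h_i,a_j\in\Bbbk G$, $h_t\neq0$ and $a_r\neq0$. Then $l_t=m_r$ and $\langle h_t\rangle=\langle a_r\rangle$.
   Context: $(a)$ denotes the two-sided ideal of $H$ generated by $a$; for $h\in\Bbbk G$, $\langle h\rangle$ denotes the two-sided ideal of $\Bbbk G$ generated by $h$. *)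

From mathcomp Require Import all_boot all_order all_algebra all_fingroup.
Set Implicit Arguments. Unset Strict Implicit. Unset Printing Implicit Defensive.
Import GRing.Theory.
Local Open Scope ring_scope.

(* The group algebra kG of a finite group gT over a field F:
   an element  sum_s c_s s  is represented by its coefficient function. *)
Definition galg (F : fieldType) (gT : finGroupType) := {ffun gT -> F}.

Definition gbasis (F : fieldType) (gT : finGroupType) (s : gT) : galg F gT :=
  [ffun u => if u == s then 1 else 0].

Definition gmul (F : fieldType) (gT : finGroupType) (a b : galg F gT) : galg F gT :=
  [ffun u => \sum_(s : gT) a s * b (s^-1 * u)%g].

(* twisting automorphism: s |-> chi(s)^(-j) s, so that  a z^j = z^j (gtwist j a) *)
Definition gtwist (F : fieldType) (gT : finGroupType) (chi : gT -> F) (j : nat)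
  (a : galg F gT) : galg F gT := [ffun s => (chi s ^+ j)^-1 * a s].

(* The algebra H generated by kG and z with z^n = 0, z s = chi(s) s z.
   It has kG-basis 1, z, ..., z^(n-1) (H = \oplus_{i<n} z^i kG);
   an element  sum_i z^i h_i  is represented by  i |-> h_i. *)
Definition Halg (F : fieldType) (gT : finGroupType) (n : nat) :=
  {ffun 'I_n -> galg F gT}.

(* the element z^l h of H (equal to 0 when l >= n, as z^n = 0) *)
Definition zmon (F : fieldType) (gT : finGroupType) (n : nat) (l : nat)
  (h : galg F gT) : Halg F gT n :=
  [ffun i : 'I_n => if val i == l then h else 0].

(* multiplication in H : (z^i a)(z^j b) = z^(i+j) (gtwist j a) b *)
Definition Hmul (F : fieldType) (gT : finGroupType) (chi : gT -> F) (n : nat)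
  (x y : Halg F gT n) : Halg F gT n :=
  [ffun k : 'I_n => \sum_(i < n) \sum_(j < n)
      if (val i + val j == val k)%N then gmul (gtwist chi j (x i)) (y j) else 0].

Definition ideal_gen (R : nmodType) (mul : R -> R -> R) (a : R) : R -> Prop :=
  fun x => exists s : seq (R * R), x = \sum_(p <- s) mul (mul p.1 a) p.2.

Definition linear_char (F : fieldType) (gT : finGroupType) (chi : gT -> F) :=
  (forall s t : gT, chi (s * t)%g = chi s * chi t) /\ (forall s, chi s != 0).

From mathcomp Require Import all_boot all_order all_algebra all_fingroup.
Set Implicit Arguments. Unset Strict Implicit. Unset Printing Implicit Defensive.
Import GRing.Theory.
Local Open Scope ring_scope.

(* Write x = sum_i z^i x_i in H.  If x_k = 0 for all k < L, then for any u, v the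
   product u x v again vanishes in degrees < L, and its degree-L coefficient is
   sigma^L(u_0) x_L v_0, where sigma is the twist of kG by chi.  Hence every element
   y of the ideal (x) vanishes below L and y_L lies in <x_L>.  The two generators lie
   in each other's ideal, so neither lowest degree can be below the other, and the
   lowest coefficients generate each other's ideals in kG. *)


Section IdealGen.
Variables (R : nmodType) (mul : R -> R -> R).

Lemma ideal_gen_refl (e : R) :
  left_id e mul -> right_id e mul -> forall a, ideal_gen mul a a.
Proof. by move=> mul1x mulx1 a; exists [:: (e, e)]; rewrite big_seq1 mul1x mulx1. Qed.

Hypotheses (mulA : associative mul)
  (mul0x : left_zero 0 mul) (mulx0 : right_zero 0 mul)
  (mulDl : left_distributive mul +%R) (mulDr : right_distributive mul +%R).

Lemma ideal_gen_trans a b x :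
  ideal_gen mul b a -> ideal_gen mul a x -> ideal_gen mul b x.
Proof.
move=> [sa ->] [sx ->].
exists [seq (mul p.1 q.1, mul q.2 p.2) | p <- sx, q <- sa].
rewrite big_allpairs_dep; apply: eq_bigr => p _.
rewrite (big_morph (mul p.1) (mulDr _) (mulx0 _)).
rewrite (big_morph (mul^~ p.2) (fun x y => mulDl x y p.2) (mul0x _)).
by apply: eq_bigr => q _ /=; rewrite !mulA.
Qed.

End IdealGen.

Section GroupAlgebra.
Variables (F : fieldType) (gT : finGroupType).
Implicit Types a b c : galg F gT.
Local Notation e := (gbasis F (1%g : gT)).
Local Notation gideal := (ideal_gen (@gmul F gT)).

Lemma gmul0r : left_zero 0 (@gmul F gT).
Proof.
by move=> b; apply/ffunP => u; rewrite !ffunE big1 // => s _; rewrite ffunE mul0r.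
Qed.

Lemma gmulr0 : right_zero 0 (@gmul F gT).
Proof.
by move=> a; apply/ffunP => u; rewrite !ffunE big1 // => s _; rewrite ffunE mulr0.
Qed.

Lemma gmulDl : left_distributive (@gmul F gT) +%R.
Proof.
move=> a b c; apply/ffunP => u; rewrite !ffunE -big_split.
by apply: eq_bigr => s _; rewrite ffunE mulrDl.
Qed.

Lemma gmulDr : right_distributive (@gmul F gT) +%R.
Proof.
move=> a b c; apply/ffunP => u; rewrite !ffunE -big_split.
by apply: eq_bigr => s _; rewrite ffunE mulrDr.
Qed.

Lemma gmulA : associative (@gmul F gT).
Proof.
move=> a b c; apply/esym/ffunP => u; rewrite !ffunE.
under eq_bigr => s _ do rewrite ffunE mulr_suml.
rewrite exchange_big; apply: eq_bigr => x _; rewrite ffunE mulr_sumr.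
rewrite (reindex_inj (mulgI x)); apply: eq_bigr => y _.
by rewrite mulKg invMg mulgA mulrA.
Qed.

Lemma gmul1r : left_id e (@gmul F gT).
Proof.
move=> b; apply/ffunP => u; rewrite ffunE (bigD1 1%g) //= [X in _ + X]big1 ?addr0.
  by rewrite ffunE eqxx invg1 mul1g mul1r.
by move=> s /negbTE s1; rewrite ffunE s1 mul0r.
Qed.

Lemma gmulr1 : right_id e (@gmul F gT).
Proof.
move=> b; apply/ffunP => u; rewrite ffunE (bigD1 u) //= [X in _ + X]big1 ?addr0.
  by rewrite ffunE mulVg eqxx mulr1.
by move=> s su; rewrite ffunE -eq_mulVg1 (negbTE su) mulr0.
Qed.

Lemma gideal_trans a b c : gideal b a -> gideal a c -> gideal b c.
Proof. exact: (@ideal_gen_trans _ (@gmul F gT) gmulA gmul0r gmulr0 gmulDl gmulDr). Qed.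

End GroupAlgebra.

Definition vanish_below (F : fieldType) (gT : finGroupType) (n : nat)
  (x : Halg F gT n) (L : nat) : Prop := forall k : 'I_n, (k < L)%N -> x k = 0.

Section TruncatedOreExtension.
Variables (F : fieldType) (gT : finGroupType) (chi : gT -> F) (n : nat).
Local Notation H := (Halg F gT n.+1).
Local Notation hmul := (Hmul chi (n:=n.+1)).
Local Notation gideal := (ideal_gen (@gmul F gT)).
Implicit Types x y u v : H.

Lemma gtwist0 j : gtwist chi j 0 = 0.
Proof. by apply/ffunP => s; rewrite !ffunE mulr0. Qed.

Lemma gtwist_exp0 a : gtwist chi 0 a = a.
Proof. by apply/ffunP => s; rewrite ffunE expr0 invr1 mul1r. Qed.

Lemma vanish_below_Hmulr u x L : vanish_below x L -> vanish_below (hmul u x) L.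
Proof.
move=> x0 k kL; rewrite ffunE big1 // => i _; rewrite big1 // => j _.
case: eqP => // ijk; rewrite x0 ?gmulr0 //.
by rewrite (leq_ltn_trans _ kL) // -ijk leq_addl.
Qed.

Lemma vanish_below_Hmull y v L : vanish_below y L -> vanish_below (hmul y v) L.
Proof.
move=> y0 k kL; rewrite ffunE big1 // => i _; rewrite big1 // => j _.
case: eqP => // ijk; rewrite y0 ?gtwist0 ?gmul0r //.
by rewrite (leq_ltn_trans _ kL) // -ijk leq_addr.
Qed.

Lemma Hmul_coef_lowr u x (L : 'I_n.+1) :
  vanish_below x L -> hmul u x L = gmul (gtwist chi L (u ord0)) (x L).
Proof.
move=> x0; rewrite ffunE (bigD1 ord0) //= [X in _ + X]big1 ?addr0 => [|i i0].
  rewrite (bigD1 L) //= ?add0n eqxx [X in _ + X]big1 ?addr0 // => j jL.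
  by rewrite ?add0n; case: eqP => // /val_inj jL'; rewrite jL' eqxx in jL.
rewrite big1 // => j _; case: eqP => // ijL; rewrite x0 ?gmulr0 // -ijL.
by rewrite -[X in (X < _)%N]add0n ltn_add2r lt0n.
Qed.

Lemma Hmul_coef_lowl y v (L : 'I_n.+1) :
  vanish_below y L -> hmul y v L = gmul (y L) (v ord0).
Proof.
move=> y0; rewrite ffunE (bigD1 L) //= [X in _ + X]big1 ?addr0 => [|i iL].
  rewrite (bigD1 ord0) //= addn0 eqxx gtwist_exp0 [X in _ + X]big1 ?addr0 // => j j0.
  by case: eqP => // /(canRL (addKn _)); rewrite subnn => j0'; case/eqP: j0; apply: val_inj.
rewrite big1 // => j _; case: eqP => // ijL; rewrite y0 ?gtwist0 ?gmul0r //.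
by rewrite ltn_neqAle (inj_eq val_inj) iL -ijL leq_addr.
Qed.

Lemma ideal_gen_Hmul_lowest x y (L : 'I_n.+1) :
  vanish_below x L -> ideal_gen hmul x y ->
  vanish_below y L /\ gideal (x L) (y L).
Proof.
move=> x0 [s ->]; split.
  move=> k kL; rewrite sum_ffunE big1 // => p _.
  exact: (vanish_below_Hmull p.2 (vanish_below_Hmulr p.1 x0)) k kL.
exists [seq (gtwist chi L (p.1 ord0), p.2 ord0) | p : H * H <- s].
rewrite sum_ffunE big_map; apply: eq_bigr => p _ /=.
by rewrite Hmul_coef_lowl ?Hmul_coef_lowr //; apply: vanish_below_Hmulr.
Qed.

Lemma ideal_gen_Hmul_lowest_eq x y (Lx Ly : 'I_n.+1) :
  ideal_gen hmul x y -> ideal_gen hmul y x ->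
  vanish_below x Lx -> x Lx != 0 -> vanish_below y Ly -> y Ly != 0 ->
  Lx = Ly /\ forall b, gideal (x Lx) b <-> gideal (y Ly) b.
Proof.
move=> xy yx x0 xLx y0 yLy.
have [y0x xy_low] := ideal_gen_Hmul_lowest x0 xy.
have [x0y yx_low] := ideal_gen_Hmul_lowest y0 yx.
have LxLy : Lx = Ly.
  apply: val_inj; case: (ltngtP Lx Ly) => [lt|lt|//].
  - by move: xLx; rewrite (x0y Lx lt) eqxx.
  - by move: yLy; rewrite (y0x Ly lt) eqxx.
subst Ly; split=> // b; split=> b_in.
  exact: gideal_trans yx_low b_in.
exact: gideal_trans xy_low b_in.
Qed.

Hypothesis chi1 : chi 1%g = 1.
Let H1 : H := zmon n.+1 0 (gbasis F (1%g : gT)).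

Lemma gtwist_gbasis1 j : gtwist chi j (gbasis F (1%g : gT)) = gbasis F (1%g : gT).
Proof.
apply/ffunP => s; rewrite !ffunE; case: eqP => [->|_]; last by rewrite mulr0.
by rewrite chi1 expr1n invr1 mulr1.
Qed.

Lemma Hmul1r : left_id H1 hmul.
Proof.
move=> x; apply/ffunP => k.
rewrite ffunE (bigD1 ord0) //= [X in _ + X]big1 ?addr0 => [|i i0].
  rewrite (bigD1 k) //= ?add0n eqxx ffunE /= gtwist_gbasis1 gmul1r.
  rewrite [X in _ + X]big1 ?addr0 // => j jk.
  by rewrite ?add0n; case: eqP => // /val_inj jk'; rewrite jk' eqxx in jk.
rewrite big1 // => j _; case: eqP => // _; rewrite ffunE.
have /negbTE -> : val i != 0%N by apply: contra i0 => /eqP i0; apply/eqP/val_inj.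
by rewrite gtwist0 gmul0r.
Qed.

Lemma Hmulr1 : right_id H1 hmul.
Proof.
move=> x; apply/ffunP => k.
rewrite ffunE (bigD1 k) //= [X in _ + X]big1 ?addr0 => [|i ik].
  rewrite (bigD1 ord0) //= addn0 eqxx ffunE /= gtwist_exp0 gmulr1.
  rewrite [X in _ + X]big1 ?addr0 // => j j0.
  by case: eqP => // /(canRL (addKn _)); rewrite subnn => j0'; case/eqP: j0; apply: val_inj.
rewrite big1 // => j _; case: eqP => // ijk; rewrite ffunE.
case: eqP => [j0|_]; last by rewrite gmulr0.
by move: ik; rewrite -(inj_eq val_inj) /= -ijk j0 addn0 eqxx.
Qed.

Lemma ideal_gen_Hmul_refl x : ideal_gen hmul x x.
Proof. exact: ideal_gen_refl Hmul1r Hmulr1 x. Qed.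

End TruncatedOreExtension.

Lemma linear_char1 (F : fieldType) (gT : finGroupType) (chi : gT -> F) :
  linear_char chi -> chi 1%g = 1.
Proof.
move=> [chiM chi_neq0]; apply: (mulfI (chi_neq0 1%g)).
by rewrite -chiM mulg1 mulr1.
Qed.

Section LowestTerm.
Variables (F : fieldType) (gT : finGroupType) (n t : nat).
Variables (l : 'I_t.+1 -> nat) (h : 'I_t.+1 -> galg F gT).
Hypothesis l_decr : forall i j : 'I_t.+1, (i < j)%N -> (l j < l i)%N.
Local Notation x := (\sum_(i < t.+1) zmon n (l i) (h i)).

Lemma decr_lt_ord_max i : i != ord_max -> (l ord_max < l i)%N.
Proof.
move=> i_max; apply: l_decr; rewrite ltn_neqAle -ltnS ltn_ord andbT.
by apply: contra i_max => /eqP i_t; apply/eqP/val_inj.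
Qed.

Lemma vanish_below_zsum : vanish_below x (l ord_max).
Proof.
move=> k k_lt; rewrite sum_ffunE big1 // => i _; rewrite ffunE.
case: eqP => // ki; case: (eqVneq i ord_max) => [i_max | /decr_lt_ord_max].
  by move: k_lt; rewrite ki i_max ltnn.
by rewrite -ki => /(ltn_trans k_lt); rewrite ltnn.
Qed.

Lemma zsum_coef_lowest (k : 'I_n) : val k = l ord_max -> x k = h ord_max.
Proof.
move=> k_min; rewrite sum_ffunE (bigD1 ord_max) //= ffunE k_min eqxx.
rewrite [X in _ + X]big1 ?addr0 // => i /decr_lt_ord_max.
by rewrite ffunE k_min => /ltn_eqF ->.
Qed.

End LowestTerm.

Theorem proposition3p5 (F : closedFieldType) (gT : finGroupType)
  (chi : gT -> F) (g : gT) (n : nat)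
  (charF : [pchar F] =i pred0)
  (hchi : linear_char chi)
  (hg : forall s : gT, commute g s)
  (hn2 : (2 <= n)%N)
  (hn : n.-primitive_root (chi g))
  (t r : nat)
  (l : 'I_t.+1 -> nat) (h : 'I_t.+1 -> galg F gT)
  (m : 'I_r.+1 -> nat) (a : 'I_r.+1 -> galg F gT)
  (hl_lt : forall i, (l i < n)%N)
  (hl_dec : forall i j : 'I_t.+1, (i < j)%N -> (l j < l i)%N)
  (hm_lt : forall i, (m i < n)%N)
  (hm_dec : forall i j : 'I_r.+1, (i < j)%N -> (m j < m i)%N)
  (hh : h ord_max != 0) (ha : a ord_max != 0)
  (hideal : forall x : Halg F gT n,
     ideal_gen (Hmul chi (n:=n)) (\sum_(i < t.+1) zmon n (l i) (h i)) x <->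
     ideal_gen (Hmul chi (n:=n)) (\sum_(j < r.+1) zmon n (m j) (a j)) x) :
  l ord_max = m ord_max /\
  (forall y : galg F gT,
     ideal_gen (@gmul F gT) (h ord_max) y <-> ideal_gen (@gmul F gT) (a ord_max) y).
Proof.
have chi1 := linear_char1 hchi.
case: n hl_lt hm_lt hideal {hn2 hn} => [/(_ ord_max) //| n] hl_lt hm_lt hideal.
set X := \sum_(i < t.+1) _ in hideal; set A := \sum_(j < r.+1) _ in hideal.
have XA : ideal_gen (Hmul chi (n:=n.+1)) X A by apply/hideal/ideal_gen_Hmul_refl.
have AX : ideal_gen (Hmul chi (n:=n.+1)) A X by apply/hideal/ideal_gen_Hmul_refl.
pose Lh : 'I_n.+1 := Ordinal (hl_lt ord_max).
pose La : 'I_n.+1 := Ordinal (hm_lt ord_max).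
have X_Lh : X Lh = h ord_max by apply: zsum_coef_lowest.
have A_La : A La = a ord_max by apply: zsum_coef_lowest.
have X_low : vanish_below X Lh by apply: vanish_below_zsum.
have A_low : vanish_below A La by apply: vanish_below_zsum.
rewrite -X_Lh in hh; rewrite -A_La in ha.
have [LhLa ideal_eq] := ideal_gen_Hmul_lowest_eq XA AX X_low hh A_low ha.
split; first exact: (congr1 (@nat_of_ord n.+1) LhLa).
by move=> y; rewrite -X_Lh -A_La; apply: ideal_eq.
Qed.
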